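(* Let $C$, $\mathbb{P}^3_{\omega+}$ and $W'=Sec(C)\cap\mathbb{P}^3_{\omega+}$ be as below. For each partition $\{w_1,\dots,w_6\}=\{w_i,w_j,w_k\}\sqcup\{w_l,w_m,w_n\}$ of the Weierstrass points into two triples, let $\mathbb{P}^2_{ijk}$ (resp. $\mathbb{P}^2_{lmn}$) be the plane of $\mathbb{P}^3_{\omega+}$ spanned by $w_i,w_j,w_k$ (resp. $w_l,w_m,w_n$) and $\mathbb{P}^1_{ijk}=\mathbb{P}^2_{ijk}\cap\mathbb{P}^2_{lmn}$. Then each of these $10$ lines $\mathbb{P}^1_{ijk}$ is contained in $W'$.
   Context: $C$ is a smooth complex projective genus 2 curve with canonical bundle $\omega$, hyperelliptic involution $\lambda$ and Weierstrass points $w_1,\dots,w_6$, embedded in $\mathbb{P}^4_\omega=\mathbb{P}(H^0(C,\omega^3)^* )$ by $|\omega^3|$. $\lambda$ is linearized on $\omega$ acting as the identity on fibres over Weierstrass points; $H^0(C,\omega^3)_\pm$ are the eigenspaces (dimensions 4 and 1), and $\mathbb{P}^3_{\omega+}=\mathbb{P}(H^0(C,\omega^3)_+^* )\subset\mathbb{P}^4_\omega$ is the hyperplane annihilating $H^0(C,\omega^3)_-$; one has $C\cap\mathbb{P}^3_{\omega+}=\{w_1,\dots,w_6\}$. $Sec(C)$ is the secant variety of $C\subset\mathbb{P}^4_\omega$. *)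

From HB Require Import structures.
From mathcomp Require Import all_boot all_order all_algebra.
From mathcomp Require Import mpoly.
Set Implicit Arguments. Unset Strict Implicit. Unset Printing Implicit Defensive.
Import Order.TTheory GRing.Theory Num.Theory.
Local Open Scope ring_scope.

(* Concrete model: C : y^2 = f(x) = \prod_{i<6} (x - a_i), a_i distinct.
   P^4_omega has homogeneous coordinates dual to the basis
   s_j = x^j (dx/y)^3 (j = 0..3), s_4 = y (dx/y)^3 of H^0(C, omega^3).
   Points of P^4 are represented by nonzero vectors of K^5 (row vectors);
   subsets of P^4 by cones in K^5. *)

Definition sextic (K : numClosedFieldType) (a : 'I_6 -> K) : {poly K} :=
  \prod_(i < 6) ('X - (a i)%:P).

Definition affpt (K : numClosedFieldType) (x y : K) : 'rV[K]_5 :=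
  \row_(j < 5) [:: 1; x; x ^+ 2; x ^+ 3; y]`_j.

(* images of the two points at infinity (y/x^3 -> s, s = 1 or -1) *)
Definition infpt (K : numClosedFieldType) (s : K) : 'rV[K]_5 :=
  \row_(j < 5) [:: 0; 0; 0; 1; s]`_j.

Definition curve_vec (K : numClosedFieldType) (a : 'I_6 -> K) (v : 'rV[K]_5) : Prop :=
  (exists x y : K, y ^+ 2 = (sextic a).[x] /\ v = affpt x y)
  \/ v = infpt 1 \/ v = infpt (-1).

Definition secant_cone (K : numClosedFieldType) (a : 'I_6 -> K) (z : 'rV[K]_5) : Prop :=
  exists p q : 'rV[K]_5, exists s t : K,
    [/\ curve_vec a p, curve_vec a q, p != q & z = s *: p + t *: q].

Definition zclosure (K : numClosedFieldType) (S : 'rV[K]_5 -> Prop) (z : 'rV[K]_5) : Prop :=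
  forall P : {mpoly K[5]},
    (forall w, S w -> P.@[fun i => w ord0 i] = 0) -> P.@[fun i => z ord0 i] = 0.

Definition Sec (K : numClosedFieldType) (a : 'I_6 -> K) : 'rV[K]_5 -> Prop :=
  zclosure (secant_cone a).

Definition Pplus (K : numClosedFieldType) (z : 'rV[K]_5) : Prop := z ord0 4%:R = 0.

Definition Wprime (K : numClosedFieldType) (a : 'I_6 -> K) (z : 'rV[K]_5) : Prop :=
  Sec a z /\ Pplus z.

Definition wpt (K : numClosedFieldType) (a : 'I_6 -> K) (i : 'I_6) : 'rV[K]_5 :=
  affpt (a i) 0.

Definition wspan (K : numClosedFieldType) (a : 'I_6 -> K) (T : {set 'I_6})
    (z : 'rV[K]_5) : Prop :=
  exists c : 'I_6 -> K, z = \sum_(i in T) c i *: wpt a i.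

From HB Require Import structures.
From mathcomp Require Import all_boot all_order all_algebra.
From mathcomp Require Import mpoly.
From mathcomp Require Import ring.
Import Order.TTheory GRing.Theory Num.Theory.
Local Open Scope ring_scope.
Set Implicit Arguments. Unset Strict Implicit. Unset Printing Implicit Defensive.

(* Let g_S = \prod_(i in S) (X - a_i), so that f = g_S g_T with T the complement
   of S.  The cone over P^1_S is cut out by z_4 = 0, <z, g_S> = 0, <z, g_T> = 0,
   where <z, g> = \sum_(k < 4) z_k g_k.  A generic point z of it has a rank-2
   moment decomposition z_k = s x1^k + t x2^k (k < 4); the two linear conditions
   then read s g(x1) + t g(x2) = 0 for g = g_S, g_T, whence s^2 f(x1) = t^2 f(x2),
   and square roots y1, y2 with s y1 + t y2 = 0 exhibit z on the chord through
   (x1, y1) and (x2, y2).  Genericity is a polynomial condition that holds at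
   a suitable combination of w_i, w_j (i != j in S), hence on a dense open
   subset of the line; so the whole line lies in the Zariski closure of the
   secant cone. *)

Section RestrictionToLines.
Variable R : numDomainType.

Lemma poly_eq0_of_horner0 (p : {poly R}) : (forall x, p.[x] = 0) -> p = 0.
Proof.
move=> p0; apply: (@roots_geq_poly_eq0 _ p [seq i%:R | i <- iota 0 (size p)]).
- by apply/allP => x /mapP [i _ ->]; rewrite /root p0.
- by rewrite map_inj_uniq ?iota_uniq // => i j /eqP; rewrite eqr_nat => /eqP.
- by rewrite size_map size_iota.
Qed.

Variable n : nat.

Definition line_restriction (P : {mpoly R[n]}) (z w : 'rV[R]_n) : {poly R} :=
  mmap polyC (fun i => (z ord0 i)%:P + (w ord0 i - z ord0 i) *: 'X) P.

Lemma horner_line_restriction P z w mu :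
  (line_restriction P z w).[mu] = P.@[(z + mu *: (w - z)) ord0].
Proof.
rewrite /line_restriction /mmap /mmap1 mevalE horner_sum.
apply: eq_bigr => m _; rewrite hornerM hornerC horner_prod; congr (_ * _).
apply: eq_bigr => i _.
by rewrite horner_exp hornerD hornerC hornerZ hornerX !mxE mulrC.
Qed.

Lemma mpoly_eq0_on_line (P E : {mpoly R[n]}) (z w : 'rV[R]_n) :
  E.@[w ord0] != 0 ->
  (forall mu, E.@[(z + mu *: (w - z)) ord0] != 0 ->
              P.@[(z + mu *: (w - z)) ord0] = 0) ->
  P.@[z ord0] = 0.
Proof.
move=> Ew0 PE; pose p := line_restriction P z w; pose e := line_restriction E z w.
have pe0 : p * e = 0.
  apply: poly_eq0_of_horner0 => mu; rewrite hornerM !horner_line_restriction.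
  by have [->|/PE->] := eqVneq E.@[(z + mu *: (w - z)) ord0] 0; rewrite ?mulr0 ?mul0r.
have e0 : e != 0.
  apply: contraNneq Ew0 => e0.
  by rewrite -[w](subrK z) addrC -[w - z]scale1r -horner_line_restriction -/e e0 horner0.
move/eqP: pe0; rewrite mulf_eq0 (negbTE e0) orbF => /eqP p0.
by rewrite -[z]addr0 -[0 : 'rV_n](scale0r (w - z)) -horner_line_restriction -/p p0 horner0.
Qed.

End RestrictionToLines.

(* For m k = s x1^k + t x2^k one has quadA m = s t (x1 - x2)^2, and x1, x2 are
   the roots of quadA m X^2 + quadB m X + quadC m. *)
Section HankelMinors.
Variable R : pzRingType.
Implicit Types m : nat -> R.

Definition quadA m := m 0%N * m 2%N - m 1%N ^+ 2.
Definition quadB m := m 1%N * m 2%N - m 0%N * m 3%N.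
Definition quadC m := m 1%N * m 3%N - m 2%N ^+ 2.
Definition genericity m := quadA m * (quadB m ^+ 2 - 4%:R * quadA m * quadC m).

End HankelMinors.

Lemma rmorph_genericity (R S : pzRingType) (f : {rmorphism R -> S}) (m : nat -> R) :
  f (genericity m) = genericity (f \o m).
Proof.
by rewrite /genericity /quadA /quadB /quadC /= !(rmorphM, rmorphB, rmorphXn, rmorph_nat).
Qed.

Section MomentDecomposition.
Variable K : numClosedFieldType.
Implicit Types (m : nat -> K) (s t : K).

Lemma genericity_moments2 m s t (x1 x2 : K) :
  (forall k, (k < 4)%N -> m k = s * x1 ^+ k + t * x2 ^+ k) ->
  genericity m = (s * t * (x1 - x2) ^+ 2) ^+ 3 * (x1 - x2) ^+ 2.
Proof. by move=> hm; rewrite /genericity /quadA /quadB /quadC !hm //; ring. Qed.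

Lemma moments2_decomposition m : genericity m != 0 ->
  exists x1 x2 s t, x1 != x2 /\
    forall k, (k < 4)%N -> m k = s * x1 ^+ k + t * x2 ^+ k.
Proof.
rewrite mulf_eq0 negb_or => /andP [A0 D0].
set A := quadA m in A0 D0 *; set B := quadB m in D0 *; set C := quadC m in D0 *.
pose d := sqrtC (B ^+ 2 - 4%:R * A * C).
have d2 : d ^+ 2 = B ^+ 2 - 4%:R * A * C by rewrite sqrtCK.
have d0 : d != 0 by rewrite sqrtC_eq0.
pose x1 := (d - B) / (2%:R * A); pose x2 := (- d - B) / (2%:R * A).
have dx12 : x1 - x2 = d / A by rewrite /x1 /x2; field.
have sum12 : A * (x1 + x2) = - B by rewrite /x1 /x2; field.
have prod12 : A * (x1 * x2) = C.
  have -> : A * (x1 * x2) = (B ^+ 2 - d ^+ 2) / (4%:R * A) by rewrite /x1 /x2; field.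
  by rewrite d2; field.
have x12_neq0 : x1 - x2 != 0 by rewrite dx12 mulf_neq0 ?invr_eq0.
pose s := (m 1%N - x2 * m 0%N) / (x1 - x2); pose t := (x1 * m 0%N - m 1%N) / (x1 - x2).
have e0 : s + t = m 0%N by rewrite /s /t; field.
have e1 : s * x1 + t * x2 = m 1%N by rewrite /s /t; field.
have rec k : A * (s * x1 ^+ k.+2 + t * x2 ^+ k.+2) =
    - B * (s * x1 ^+ k.+1 + t * x2 ^+ k.+1) - C * (s * x1 ^+ k + t * x2 ^+ k).
  by rewrite -sum12 -prod12 !exprS; ring.
have e2 : s * x1 ^+ 2 + t * x2 ^+ 2 = m 2%N.
  apply: (mulfI A0); rewrite (rec 0%N) expr1 expr0 !mulr1 e0 e1.
  by rewrite /A /B /C /quadA /quadB /quadC; ring.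
have e3 : s * x1 ^+ 3 + t * x2 ^+ 3 = m 3%N.
  apply: (mulfI A0); rewrite (rec 1%N) expr1 e1 e2.
  by rewrite /A /B /C /quadA /quadB /quadC; ring.
exists x1, x2, s, t; split; first by rewrite -subr_eq0.
by case=> [|[|[|[|k]]]] // _; rewrite ?expr0 ?expr1 ?mulr1.
Qed.

Lemma sqrt_pair_lincomb0 (f1 f2 s t : K) : s ^+ 2 * f1 = t ^+ 2 * f2 ->
  exists y1 y2, [/\ y1 ^+ 2 = f1, y2 ^+ 2 = f2 & s * y1 + t * y2 = 0].
Proof.
move=> hf; have [s0|s0] := eqVneq s 0.
  have [t0|t0] := eqVneq t 0.
    by exists (sqrtC f1), (sqrtC f2); rewrite !sqrtCK s0 t0 !mul0r addr0.
  move: hf; rewrite s0 expr0n mul0r => /esym/eqP.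
  rewrite mulf_eq0 expf_eq0 (negbTE t0) /= => /eqP f20.
  by exists (sqrtC f1), 0; rewrite sqrtCK f20 expr0n mul0r mulr0 addr0.
exists (- t * sqrtC f2 / s), (sqrtC f2); split; last 2 first.
- exact: sqrtCK.
- by field.
have -> : f1 = t ^+ 2 * f2 / s ^+ 2 by rewrite -hf; field.
by rewrite !exprMn sqrtCK; field.
Qed.

End MomentDecomposition.

Section Coordinates.
Variable K : numClosedFieldType.
Implicit Types (z w : 'rV[K]_5) (g : {poly K}) (s t : K).

Definition coord z (k : nat) : K := z ord0 (inord k).

Definition pairing z g : K := \sum_(k < 4) coord z k * g`_k.

Lemma coord_inj z w : (forall k, (k < 5)%N -> coord z k = coord w k) -> z = w.
Proof. by move=> zw; apply/rowP => j; have := zw j (ltn_ord j); rewrite /coord inord_val. Qed.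

Lemma coord4 z : coord z 4 = z ord0 4%:R.
Proof. by rewrite /coord; congr (z ord0 _); apply: val_inj; rewrite /= inordK. Qed.

Lemma coord_lincomb s t z w k :
  coord (s *: z + t *: w) k = s * coord z k + t * coord w k.
Proof. by rewrite /coord !mxE. Qed.

Lemma coord_sum (T : {set 'I_6}) (c : 'I_6 -> K) (v : 'I_6 -> 'rV[K]_5) k :
  coord (\sum_(i in T) c i *: v i) k = \sum_(i in T) c i * coord (v i) k.
Proof. by rewrite /coord summxE; apply: eq_bigr => i _; rewrite mxE. Qed.

Lemma coord_affpt (x y : K) k : (k < 4)%N -> coord (affpt x y) k = x ^+ k.
Proof. by case: k => [|[|[|[|k]]]] // _; rewrite /coord /affpt mxE inordK //= ?expr0 ?expr1. Qed.

Lemma coord_affpt4 (x y : K) : coord (affpt x y) 4 = y.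
Proof. by rewrite /coord /affpt mxE inordK. Qed.

Lemma pairing_moments2 z g s t (x1 x2 : K) :
  (forall k, (k < 4)%N -> coord z k = s * x1 ^+ k + t * x2 ^+ k) ->
  (size g <= 4)%N -> pairing z g = s * g.[x1] + t * g.[x2].
Proof.
move=> hz hg; rewrite /pairing !(horner_coef_wide _ hg) !mulr_sumr -big_split /=.
by apply: eq_bigr => k _; rewrite hz //; ring.
Qed.

Lemma pairing_affpt (x y : K) g : (size g <= 4)%N -> pairing (affpt x y) g = g.[x].
Proof.
move=> hg; rewrite (@pairing_moments2 _ _ 1 0 x 0) ?mul1r ?mul0r ?addr0 // => k hk.
by rewrite coord_affpt // mul1r mul0r addr0.
Qed.

Lemma pairing_lincomb s t z w g :
  pairing (s *: z + t *: w) g = s * pairing z g + t * pairing w g.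
Proof.
rewrite /pairing !mulr_sumr -big_split /=; apply: eq_bigr => k _.
by rewrite coord_lincomb; ring.
Qed.

Lemma pairing_sum (T : {set 'I_6}) (c : 'I_6 -> K) (v : 'I_6 -> 'rV[K]_5) g :
  pairing (\sum_(i in T) c i *: v i) g = \sum_(i in T) c i * pairing (v i) g.
Proof.
rewrite /pairing; under eq_bigr do rewrite coord_sum mulr_suml.
rewrite exchange_big; apply: eq_bigr => i _; rewrite mulr_sumr.
by apply: eq_bigr => k _; rewrite mulrA.
Qed.

Definition genericity_mpoly : {mpoly K[5]} := genericity (fun k => 'X_(inord k)).

Lemma meval_genericity_mpoly z : genericity_mpoly.@[z ord0] = genericity (coord z).
Proof. by rewrite rmorph_genericity /genericity /quadA /quadB /quadC /= !mevalXU. Qed.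

End Coordinates.

Section SecantLine.
Variables (K : numClosedFieldType) (a : 'I_6 -> K) (gS gT : {poly K}).
Hypotheses (gS_size : (size gS <= 4)%N) (gT_size : (size gT <= 4)%N).
Hypothesis sextic_factor : sextic a = gS * gT.

Definition line_cone (z : 'rV[K]_5) : Prop :=
  [/\ coord z 4 = 0, pairing z gS = 0 & pairing z gT = 0].

Lemma line_cone_affine z w mu :
  line_cone z -> line_cone w -> line_cone (z + mu *: (w - z)).
Proof.
have -> : z + mu *: (w - z) = (1 - mu) *: z + mu *: w.
  by rewrite scalerBr scalerBl scale1r addrA addrAC.
move=> [z4 zS zT] [w4 wS wT].
by split; rewrite ?coord_lincomb ?pairing_lincomb ?z4 ?w4 ?zS ?zT ?wS ?wT !mulr0 addr0.
Qed.

Lemma secant_cone_of_line_cone z :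
  line_cone z -> genericity (coord z) != 0 -> secant_cone a z.
Proof.
move=> [z4 zS zT] /moments2_decomposition [x1 [x2 [s [t [x12 zm]]]]].
have {}zS : s * gS.[x1] + t * gS.[x2] = 0 by rewrite -(pairing_moments2 zm).
have {}zT : s * gT.[x1] + t * gT.[x2] = 0 by rewrite -(pairing_moments2 zm).
have f12 : s ^+ 2 * (sextic a).[x1] = t ^+ 2 * (sextic a).[x2].
  apply/eqP; rewrite sextic_factor !hornerM -subr_eq0.
  have -> : s ^+ 2 * (gS.[x1] * gT.[x1]) - t ^+ 2 * (gS.[x2] * gT.[x2]) =
      (s * gS.[x1] + t * gS.[x2]) * (s * gT.[x1])
      - t * gS.[x2] * (s * gT.[x1] + t * gT.[x2]) by ring.
  by rewrite zS zT mul0r mulr0 subrr.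
have [y1 [y2 [y1f y2f y12]]] := sqrt_pair_lincomb0 f12.
exists (affpt x1 y1), (affpt x2 y2), s, t; split.
- by left; exists x1, y1.
- by left; exists x2, y2.
- by apply: contra_neq x12 => /(congr1 (fun v => coord v 1)); rewrite !coord_affpt.
apply: coord_inj => k k5; rewrite coord_lincomb.
case: (ltnP k 4) => [k4|]; first by rewrite zm // !coord_affpt.
move=> k4; have -> : k = 4%N by apply/eqP; rewrite eqn_leq -ltnS k5 k4.
by rewrite z4 !coord_affpt4.
Qed.

Lemma Sec_of_line_cone z w :
  line_cone z -> line_cone w -> genericity (coord w) != 0 -> Sec a z.
Proof.
move=> Lz Lw gw P P0; apply: (mpoly_eq0_on_line (E := genericity_mpoly K) (w := w)).
  by rewrite meval_genericity_mpoly.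
move=> mu; rewrite meval_genericity_mpoly => gmu; apply: P0.
exact: secant_cone_of_line_cone (line_cone_affine _ Lz Lw) gmu.
Qed.

End SecantLine.

Section WeierstrassPoints.
Variables (K : numClosedFieldType) (a : 'I_6 -> K).
Implicit Types (S T : {set 'I_6}) (z : 'rV[K]_5).

Definition wpoly (T : {set 'I_6}) : {poly K} := \prod_(i in T) ('X - (a i)%:P).

Lemma size_wpoly T : size (wpoly T) = #|T|.+1.
Proof. by rewrite /wpoly -big_enum size_prod_XsubC cardE. Qed.

Lemma horner_wpoly T x : (wpoly T).[x] = \prod_(i in T) (x - a i).
Proof. by rewrite /wpoly horner_prod; apply: eq_bigr => i _; rewrite hornerXsubC. Qed.

Lemma wpoly_root T i : i \in T -> (wpoly T).[a i] = 0.
Proof. by move=> iT; rewrite horner_wpoly (bigD1 i) //= subrr mul0r. Qed.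

Lemma wpoly_nroot T i : injective a -> i \notin T -> (wpoly T).[a i] != 0.
Proof.
move=> a_inj iT; rewrite horner_wpoly; apply/prodf_neq0 => j jT.
by rewrite subr_eq0; apply: contraNneq iT => /a_inj ->.
Qed.

Lemma sextic_wpoly_split T : sextic a = wpoly T * wpoly (~: T).
Proof.
rewrite /sextic /wpoly (bigID (mem T)) /=; congr (_ * _).
by apply: eq_bigl => i; rewrite in_setC.
Qed.

Lemma card_setC_triple S : #|S| = 3%N -> #|~: S| = 3%N.
Proof. by move=> S3; apply/eqP; rewrite -(eqn_add2l 3) -{1}S3 cardsC card_ord. Qed.

Lemma wspan_coord4 T z : wspan a T z -> coord z 4 = 0.
Proof. by move=> [c ->]; rewrite coord_sum big1 // => i _; rewrite coord_affpt4 mulr0. Qed.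

Lemma wspan_pairing_wpoly T z : (#|T| <= 3)%N -> wspan a T z -> pairing z (wpoly T) = 0.
Proof.
move=> T3 [c ->]; rewrite pairing_sum big1 // => i iT.
by rewrite pairing_affpt ?size_wpoly // wpoly_root // mulr0.
Qed.

Lemma wspan_line_cone S z : #|S| = 3%N ->
  wspan a S z -> wspan a (~: S) z -> line_cone (wpoly S) (wpoly (~: S)) z.
Proof.
move=> S3 zS zSC; split; first exact: wspan_coord4 zS.
- by apply: wspan_pairing_wpoly zS; rewrite S3.
- by apply: wspan_pairing_wpoly zSC; rewrite card_setC_triple.
Qed.

Lemma exists_generic_line_point S : injective a -> #|S| = 3%N ->
  exists2 w, line_cone (wpoly S) (wpoly (~: S)) w & genericity (coord w) != 0.
Proof.
move=> a_inj S3; have /card_gt1P [i [j [iS jS ij]]] : (1 < #|S|)%N by rewrite S3.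
set gT := wpoly (~: S); pose s := gT.[a j]; pose t := - gT.[a i].
have s0 : s != 0 by apply: wpoly_nroot; rewrite // in_setC jS.
have t0 : t != 0 by rewrite oppr_eq0; apply: wpoly_nroot; rewrite // in_setC iS.
have aij : a i - a j != 0 by rewrite subr_eq0; apply: contra_neq ij => /a_inj.
have S4 : (size (wpoly S) <= 4)%N by rewrite size_wpoly S3.
have T4 : (size gT <= 4)%N by rewrite size_wpoly card_setC_triple.
exists (s *: wpt a i + t *: wpt a j); first split.
- by rewrite coord_lincomb !coord_affpt4 !mulr0 addr0.
- by rewrite pairing_lincomb !pairing_affpt // !wpoly_root // !mulr0 addr0.
- by rewrite pairing_lincomb !pairing_affpt // /s /t mulrC mulNr addrN.
rewrite (@genericity_moments2 _ _ s t (a i) (a j)).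
  by rewrite !mulf_neq0 ?expf_neq0.
by move=> k k4; rewrite coord_lincomb !coord_affpt.
Qed.

End WeierstrassPoints.

Unset Implicit Arguments.

Theorem mainTheorem12 (K : numClosedFieldType) (a : 'I_6 -> K)
    (a_inj : injective a) (S : {set 'I_6}) (hS : #|S| = 3%N)
    (z : 'rV[K]_5) :
  wspan a S z -> wspan a (~: S) z -> Wprime a z.
Proof.
move=> zS zSC; have Lz := wspan_line_cone hS zS zSC.
have [w Lw gw] := exists_generic_line_point a_inj hS.
split; last by case: Lz; rewrite /Pplus -coord4.
apply: (Sec_of_line_cone _ _ (sextic_wpoly_split a S) Lz Lw gw).
- by rewrite size_wpoly hS.
- by rewrite size_wpoly card_setC_triple.
Qed.
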